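(* Let $(\Sigma_+,\Sigma_-,N_1,N_2,N_3)$ be a solution of the Wainwright–Hsu system satisfying the constraint, and define for $i=1,2,3$ $$a_i(\tau)=\exp\Big(-\int_0^\tau(3\Sigma_i(s)+1)\,ds\Big),$$ where $\Sigma_1=-\frac23\Sigma_+$, $\Sigma_2=\frac13\Sigma_++\frac1{\sqrt3}\Sigma_-$, $\Sigma_3=\frac13\Sigma_+-\frac1{\sqrt3}\Sigma_-$. (a) If $N_1=0$, $N_2,N_3>0$ and $N_2=N_3$, $\Sigma_-=0$ never hold simultaneously, then $a_i(\tau)\to0$ as $\tau\to\infty$ for $i=1,2,3$. (b) If $N_1<0$ and $N_2,N_3>0$, then $a_2(\tau)\to0$ and $a_3(\tau)\to0$ as $\tau\to\infty$, and $a_1$ is bounded on $[0,\infty)$; in particular all three $a_i$ are bounded as $\tau\to\infty$.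
   Context: Wainwright–Hsu system: for functions $N_1,N_2,N_3,\Sigma_+,\Sigma_-$ of $\tau\in\mathbb{R}$ (prime denotes $d/d\tau$), $N_1'=(q-4\Sigma_+)N_1$, $N_2'=(q+2\Sigma_++2\sqrt3\Sigma_-)N_2$, $N_3'=(q+2\Sigma_+-2\sqrt3\Sigma_-)N_3$, $\Sigma_+'=-(2-q)\Sigma_+-3S_+$, $\Sigma_-'=-(2-q)\Sigma_--3S_-$, where $q=2(\Sigma_+^2+\Sigma_-^2)$, $S_+=\frac12[(N_2-N_3)^2-N_1(2N_1-N_2-N_3)]$, $S_-=\frac{\sqrt3}{2}(N_3-N_2)(N_1-N_2-N_3)$, together with the constraint $\Sigma_+^2+\Sigma_-^2+\frac34[N_1^2+N_2^2+N_3^2-2(N_1N_2+N_2N_3+N_1N_3)]=1$. Solutions with these sign conditions exist for all $\tau\in\mathbb{R}$. (Geometrically, the spacetime metric is $-dt^2+\sum_i a_i^{-2}\xi^i\otimes\xi^i$ with $\xi^i$ a left-invariant coframe and $dt/d\tau=3/\theta$.) *)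

From Stdlib Require Import Reals.
From Coquelicot Require Import Coquelicot.
Open Scope R_scope.

Definition q_WH (Sp Sm : R) : R := 2 * (Sp ^ 2 + Sm ^ 2).
Definition Splus_WH (N1 N2 N3 : R) : R :=
  / 2 * ((N2 - N3) ^ 2 - N1 * (2 * N1 - N2 - N3)).
Definition Sminus_WH (N1 N2 N3 : R) : R :=
  sqrt 3 / 2 * (N3 - N2) * (N1 - N2 - N3).

Definition WH_solution (N1 N2 N3 Sp Sm : R -> R) : Prop :=
  (forall t, is_derive N1 t ((q_WH (Sp t) (Sm t) - 4 * Sp t) * N1 t)) /\
  (forall t, is_derive N2 t
     ((q_WH (Sp t) (Sm t) + 2 * Sp t + 2 * sqrt 3 * Sm t) * N2 t)) /\
  (forall t, is_derive N3 t
     ((q_WH (Sp t) (Sm t) + 2 * Sp t - 2 * sqrt 3 * Sm t) * N3 t)) /\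
  (forall t, is_derive Sp t
     (- (2 - q_WH (Sp t) (Sm t)) * Sp t - 3 * Splus_WH (N1 t) (N2 t) (N3 t))) /\
  (forall t, is_derive Sm t
     (- (2 - q_WH (Sp t) (Sm t)) * Sm t - 3 * Sminus_WH (N1 t) (N2 t) (N3 t))) /\
  (forall t, Sp t ^ 2 + Sm t ^ 2
     + 3 / 4 * (N1 t ^ 2 + N2 t ^ 2 + N3 t ^ 2
                - 2 * (N1 t * N2 t + N2 t * N3 t + N1 t * N3 t)) = 1).

Definition Sigma1 (Sp Sm : R -> R) (s : R) : R := - (2 / 3) * Sp s.
Definition Sigma2 (Sp Sm : R -> R) (s : R) : R := / 3 * Sp s + / sqrt 3 * Sm s.
Definition Sigma3 (Sp Sm : R -> R) (s : R) : R := / 3 * Sp s - / sqrt 3 * Sm s.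

Definition a_of (Sig : R -> R) (tau : R) : R :=
  exp (- RInt (fun s => 3 * Sig s + 1) 0 tau).

Definition bounded_on_nonneg (f : R -> R) : Prop :=
  exists M : R, forall tau, 0 <= tau -> Rabs (f tau) <= M.

(* Write T = sqrt 3 * Sigma_- and a_i = exp (- int_0^tau r_i) with rates r_1 = 1 - 2 Sigma_+
   and r_2, r_3 = 1 + Sigma_+ +- T; the case of a_3 follows from that of a_2 by the symmetry
   N2 <-> N3, T <-> -T of the system.

   (b) When N1 < 0 < N2, N3 the constraint gives -N1 N2, -N1 N3 <= 2/3, and the functionals
   a_1^2 / (N1^2 N2 N3) and a_2^2 e^(2 tau / 3) / ((-N1)^3 N2^2 N3) are nonincreasing, their
   logarithmic derivatives being minus sums of squares. Hence a_1 is bounded and a_2 decays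
   like e^(-tau/3).

   (a) When N1 = 0, a_2^2 N2 / (1 + Sigma_+) is conserved, and
   N2^2 N3^2 / ((1 + Sigma_+)^3 (1 / (1 + Sigma_+(0)) + 4 tau)) is nondecreasing; this forces
   N2 / (1 + Sigma_+) -> oo and so a_2 -> 0. Sigma_+ is nonincreasing: once it is below 1/2
   the rate r_1 stays bounded below by a positive constant and a_1 decays exponentially, while
   if Sigma_+ stayed >= 1/2 the quantity -ln (1 + Sigma_+) + T (N2 - N3) / (6 (N2 + N3)) would
   grow linearly although it is eventually at most 1/6. *)

From Stdlib Require Import Reals Lra Psatz Classical FunctionalExtensionality.
From Coquelicot Require Import Coquelicot.
Open Scope R_scope.

Definition scale (f : R -> R) (t : R) : R := exp (- RInt f 0 t).

Lemma scale_pos f t : 0 < scale f t.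
Proof. apply exp_pos. Qed.

Lemma scale_0 f : scale f 0 = 1.
Proof. unfold scale. rewrite RInt_point. unfold zero; simpl. rewrite Ropp_0. apply exp_0. Qed.

Ltac positivity :=
  repeat (apply Rmult_lt_0_compat || apply Rinv_0_lt_compat || apply exp_pos
          || apply scale_pos || apply pow_lt); try lra.

(* Eta-expanded, as auto_derive leaves its Derive terms. *)
Lemma is_derive_Derive (f : R -> R) (x l : R) :
  is_derive f x l -> Derive (fun y => f y) x = l.
Proof. apply is_derive_unique. Qed.

Lemma is_derive_eq (f : R -> R) (x l l' : R) : is_derive f x l -> l = l' -> is_derive f x l'.
Proof. now intros H <-. Qed.

Ltac ex_derive_by_hyps := repeat match goal with
  | |- _ /\ _ => split
  | |- True => exact I
  | |- ex_derive (fun y => ?f y) ?x =>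
      match goal with H : forall t, is_derive f t _ |- _ => exact (ex_intro _ _ (H x)) end
  end.

Lemma continuous_of_ex_derive (f : R -> R) : (forall x, ex_derive f x) -> forall x, continuous f x.
Proof. intros Hf x. apply (ex_derive_continuous (K := R_AbsRing) (V := R_NormedModule)), Hf. Qed.

Lemma is_derive_scale (f : R -> R) :
  (forall x, continuous f x) -> forall t, is_derive (scale f) t (- f t * scale f t).
Proof.
  intros Hf t. unfold scale. auto_derive.
  - split; [apply (ex_RInt_continuous (V := R_CompleteNormedModule)); intros; apply Hf|].
    split; [|exact I]. apply filter_forall. intros x.
    apply continuity_pt_filterlim, Hf.
  - now rewrite Rmult_1_l.
Qed.

Lemma a_of_scale (Sig f : R -> R) :
  (forall s, 3 * Sig s + 1 = f s) -> a_of Sig = scale f.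
Proof.
  intros H. apply functional_extensionality. intros t. unfold a_of, scale.
  do 2 f_equal. apply RInt_ext. intros; apply H.
Qed.

Lemma nonincreasing_of_derive (f df : R -> R) (a b : R) : a <= b ->
  (forall x, a <= x <= b -> is_derive f x (df x)) ->
  (forall x, a <= x <= b -> df x <= 0) -> f b <= f a.
Proof.
  intros Hab Hd Hneg.
  assert (Hd' : forall x, Rmin a b <= x <= Rmax a b -> is_derive f x (df x)).
  { rewrite Rmin_left, Rmax_right by lra. exact Hd. }
  destruct (MVT_gen f a b df) as [c [Hc Heq]].
  - intros x Hx. apply Hd'. lra.
  - intros x Hx. apply continuity_pt_filterlim, (ex_derive_continuous f x).
    exists (df x). apply Hd'. exact Hx.
  - rewrite Rmin_left, Rmax_right in Hc by lra.
    pose proof (Hneg c Hc). nra.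
Qed.

Lemma nondecreasing_of_derive (f df : R -> R) (a b : R) : a <= b ->
  (forall x, a <= x <= b -> is_derive f x (df x)) ->
  (forall x, a <= x <= b -> 0 <= df x) -> f a <= f b.
Proof.
  intros Hab Hd Hpos.
  enough (- f b <= - f a) by lra.
  apply (nonincreasing_of_derive (fun x => - f x) (fun x => - df x)); [exact Hab| |].
  - intros x Hx. apply (is_derive_opp _ _ _ (Hd x Hx)).
  - intros x Hx. specialize (Hpos x Hx). lra.
Qed.

Lemma unbounded_of_derive_ge (g dg : R -> R) (T0 c B : R) : 0 < c ->
  (forall x, T0 <= x -> is_derive g x (dg x)) -> (forall x, T0 <= x -> c <= dg x) ->
  exists t, T0 <= t /\ B < g t.
Proof.
  intros Hc Hd Hge. set (t := T0 + (Rabs (B - g T0) + 1) / c).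
  assert (Ht : T0 <= t).
  { unfold t. pose proof (Rabs_pos (B - g T0)).
    assert (0 <= (Rabs (B - g T0) + 1) / c) by (apply Rlt_le, Rdiv_lt_0_compat; lra). lra. }
  exists t. split; [exact Ht|].
  assert (g T0 - c * T0 <= g t - c * t).
  { apply (nondecreasing_of_derive (fun x => g x - c * x) (fun x => dg x - c)); [exact Ht| |].
    - intros x Hx. specialize (Hd x (proj1 Hx)). auto_derive.
      + now exists (dg x).
      + rewrite (is_derive_Derive _ _ _ Hd). ring.
    - intros x Hx. specialize (Hge x (proj1 Hx)). lra. }
  assert (c * (t - T0) = Rabs (B - g T0) + 1) by (unfold t; field; lra).
  pose proof (Rle_abs (B - g T0)). lra.
Qed.

Lemma is_lim_scal_exp_neg (C k : R) : 0 < k ->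
  is_lim (fun t => C * exp (- k * t)) p_infty 0.
Proof.
  intros Hk. replace (Finite 0) with (Rbar_mult C 0) by (simpl; now rewrite Rmult_0_r).
  apply is_lim_scal_l, (is_lim_comp exp (fun t => - k * t) p_infty 0 m_infty).
  - exact is_lim_exp_m.
  - replace m_infty with (Rbar_mult (- k) p_infty).
    + apply is_lim_scal_l, is_lim_id.
    + unfold Rbar_mult, Rbar_mult'.
      destruct (Rle_dec 0 (- k)); [exfalso; lra|reflexivity].
  - now exists 0.
Qed.

Lemma is_lim_0_of_le (g h : R -> R) (T0 : R) : (forall t, 0 <= g t) ->
  (forall t, T0 <= t -> g t <= h t) -> is_lim h p_infty 0 -> is_lim g p_infty 0.
Proof.
  intros Hg Hle Hh. apply (is_lim_le_le_loc (fun _ => 0) h); [|apply is_lim_const|exact Hh].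
  exists T0. intros t Ht. split; [apply Hg|apply Hle; lra].
Qed.

Lemma is_lim_0_of_sq (g : R -> R) : (forall t, 0 <= g t) ->
  is_lim (fun t => g t ^ 2) p_infty 0 -> is_lim g p_infty 0.
Proof.
  intros Hg Hsq. apply is_lim_spec. intros eps.
  destruct (proj2 (is_lim_spec _ _ _) Hsq (mkposreal _ (pow_lt _ 2 (cond_pos eps))))
    as [M HM].
  exists M. intros t Ht. specialize (HM t Ht). simpl in HM.
  rewrite Rminus_0_r, Rabs_pos_eq in HM |- * by (try apply pow2_ge_0; apply Hg).
  destruct eps as [e He]; simpl in *.
  destruct (Rlt_le_dec (g t) e) as [Hlt|Hge]; [exact Hlt|].
  pose proof (pow_incr e (g t) 2 (conj (Rlt_le _ _ He) Hge)). lra.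
Qed.

Lemma bounded_on_nonneg_of_sq_le (g : R -> R) (C : R) : (forall t, 0 <= g t) ->
  (forall t, 0 <= t -> g t ^ 2 <= C) -> bounded_on_nonneg g.
Proof.
  intros Hg HC. exists (sqrt C). intros t Ht.
  rewrite Rabs_pos_eq, <- (sqrt_pow2 (g t)) by apply Hg.
  apply sqrt_le_1_alt, HC, Ht.
Qed.

Lemma lim_0_and_bounded_of_sq_le_exp (g : R -> R) (C k : R) : 0 < k ->
  (forall t, 0 <= g t) -> (forall t, 0 <= t -> g t ^ 2 <= C * exp (- k * t)) ->
  is_lim g p_infty 0 /\ bounded_on_nonneg g.
Proof.
  intros Hk Hg Hle. split.
  - apply is_lim_0_of_sq; [exact Hg|].
    apply (is_lim_0_of_le _ (fun t => C * exp (- k * t)) 0);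
      [intros; apply pow2_ge_0|exact Hle|].
    apply is_lim_scal_exp_neg, Hk.
  - apply (bounded_on_nonneg_of_sq_le g C Hg). intros t Ht.
    assert (HC : 0 <= C).
    { pose proof (Hle 0 (Rle_refl 0)). pose proof (pow2_ge_0 (g 0)).
      rewrite Rmult_0_r, exp_0 in H. lra. }
    assert (exp (- k * t) <= 1).
    { rewrite <- exp_0. destruct (Rle_lt_or_eq_dec 0 t Ht) as [Hpos|<-].
      - apply Rlt_le, exp_increasing. nra.
      - rewrite Rmult_0_r. apply Rle_refl. }
    pose proof (Hle t Ht). nra.
Qed.

Lemma sqrt3_pos : 0 < sqrt 3.
Proof. apply sqrt_lt_R0. lra. Qed.

Lemma sqrt3_pow2 : sqrt 3 ^ 2 = 3.
Proof. apply pow2_sqrt. lra. Qed.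

Lemma sqrt3_pow3 : sqrt 3 ^ 3 = 3 * sqrt 3.
Proof. replace (sqrt 3 ^ 3) with (sqrt 3 ^ 2 * sqrt 3) by ring. now rewrite sqrt3_pow2. Qed.

Lemma sqrt3_pow4 : sqrt 3 ^ 4 = 9.
Proof. replace (sqrt 3 ^ 4) with (sqrt 3 ^ 2 * sqrt 3 ^ 2) by ring. rewrite sqrt3_pow2. ring. Qed.

Lemma three_div_sqrt3 : 3 / sqrt 3 = sqrt 3.
Proof. pose proof sqrt3_pos. rewrite <- sqrt3_pow2 at 1. field. lra. Qed.

(* The system in the variables (Sp, T) with T = sqrt 3 * Sm, free of square roots of 3. *)
Definition q_T (x y : R) : R := 2 * x ^ 2 + 2 / 3 * y ^ 2.

Record WH_scaled (N1 N2 N3 Sp T : R -> R) : Prop := {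
  deriv_N1 : forall t, is_derive N1 t ((q_T (Sp t) (T t) - 4 * Sp t) * N1 t);
  deriv_N2 : forall t, is_derive N2 t ((q_T (Sp t) (T t) + 2 * Sp t + 2 * T t) * N2 t);
  deriv_N3 : forall t, is_derive N3 t ((q_T (Sp t) (T t) + 2 * Sp t - 2 * T t) * N3 t);
  deriv_Sp : forall t, is_derive Sp t (- (2 - q_T (Sp t) (T t)) * Sp t
    - 3 / 2 * ((N2 t - N3 t) ^ 2 - N1 t * (2 * N1 t - N2 t - N3 t)));
  deriv_T : forall t, is_derive T t (- (2 - q_T (Sp t) (T t)) * T t
    - 9 / 2 * (N3 t - N2 t) * (N1 t - N2 t - N3 t));
  constraint : forall t, Sp t ^ 2 + T t ^ 2 / 3 + 3 / 4 * (N1 t ^ 2 + N2 t ^ 2 + N3 t ^ 2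
    - 2 * (N1 t * N2 t + N2 t * N3 t + N1 t * N3 t)) = 1 }.

Ltac sqrt3_field :=
  unfold q_T, q_WH, Splus_WH, Sminus_WH, Rdiv; ring_simplify;
  rewrite ?sqrt3_pow4, ?sqrt3_pow3, ?sqrt3_pow2; field.

Lemma WH_solution_scaled N1 N2 N3 Sp Sm : WH_solution N1 N2 N3 Sp Sm ->
  WH_scaled N1 N2 N3 Sp (fun t => sqrt 3 * Sm t).
Proof.
  intros (dN1 & dN2 & dN3 & dSp & dSm & con).
  split; intros t.
  - eapply is_derive_eq; [apply dN1|]. sqrt3_field.
  - eapply is_derive_eq; [apply dN2|]. sqrt3_field.
  - eapply is_derive_eq; [apply dN3|]. sqrt3_field.
  - eapply is_derive_eq; [apply dSp|]. sqrt3_field.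
  - eapply is_derive_eq. apply (is_derive_scal _ _ (sqrt 3) _ (dSm t)).
    unfold scal; simpl; unfold mult; simpl. sqrt3_field.
  - rewrite <- (con t). sqrt3_field.
Qed.

Lemma WH_scaled_swap N1 N2 N3 Sp T : WH_scaled N1 N2 N3 Sp T ->
  WH_scaled N1 N3 N2 Sp (fun t => - T t).
Proof.
  intros [dN1 dN2 dN3 dSp dT con]. split; intros t; cbv beta.
  - eapply is_derive_eq; [apply dN1|]. unfold q_T. ring.
  - eapply is_derive_eq; [apply dN3|]. unfold q_T. ring.
  - eapply is_derive_eq; [apply dN2|]. unfold q_T. ring.
  - eapply is_derive_eq; [apply dSp|]. unfold q_T. ring.
  - eapply is_derive_eq. apply (is_derive_opp _ _ _ (dT t)). unfold opp, q_T; simpl. ring.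
  - rewrite <- (con t). field.
Qed.

Section Rates.
Variables (N1 N2 N3 Sp T : R -> R).
Hypothesis HWH : WH_scaled N1 N2 N3 Sp T.

Lemma continuous_rate1 : forall x, continuous (fun s => 1 - 2 * Sp s) x.
Proof.
  destruct HWH as [_ _ _ dSp _ _].
  apply continuous_of_ex_derive. intros x. auto_derive. ex_derive_by_hyps.
Qed.

Lemma continuous_rate2 : forall x, continuous (fun s => 1 + Sp s + T s) x.
Proof.
  destruct HWH as [_ _ _ dSp dT _].
  apply continuous_of_ex_derive. intros x. auto_derive. ex_derive_by_hyps.
Qed.

End Rates.

Lemma a_of_Sigma1 Sp Sm : a_of (Sigma1 Sp Sm) = scale (fun s => 1 - 2 * Sp s).
Proof. apply a_of_scale. intros s. unfold Sigma1. field. Qed.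

Lemma a_of_Sigma2 Sp Sm :
  a_of (Sigma2 Sp Sm) = scale (fun s => 1 + Sp s + sqrt 3 * Sm s).
Proof.
  apply a_of_scale. intros s. unfold Sigma2. pose proof sqrt3_pos.
  rewrite <- three_div_sqrt3 at 2. field. lra.
Qed.

Lemma a_of_Sigma3 Sp Sm :
  a_of (Sigma3 Sp Sm) = scale (fun s => 1 + Sp s + - (sqrt 3 * Sm s)).
Proof.
  apply a_of_scale. intros s. unfold Sigma3. pose proof sqrt3_pos.
  rewrite <- three_div_sqrt3 at 2. field. lra.
Qed.

Section TypeVIII.
Variables (N1 N2 N3 Sp T : R -> R).
Hypothesis HWH : WH_scaled N1 N2 N3 Sp T.
Hypothesis Hsign : forall t, N1 t < 0 /\ 0 < N2 t /\ 0 < N3 t.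

Let a1 := scale (fun s => 1 - 2 * Sp s).
Let a2 := scale (fun s => 1 + Sp s + T s).
Let P1 t := (- N1 t) ^ 2 * N2 t * N3 t.
Let P2 t := (- N1 t) ^ 3 * N2 t ^ 2 * N3 t.
Let V1 t := a1 t ^ 2 / P1 t.
Let V2 t := a2 t ^ 2 * exp (2 / 3 * t) / P2 t.

Lemma neg_N1_mul_le t : - N1 t * N2 t <= 2 / 3 /\ - N1 t * N3 t <= 2 / 3.
Proof.
  pose proof (constraint _ _ _ _ _ HWH t) as con. destruct (Hsign t) as (h1 & h2 & h3).
  pose proof (pow2_ge_0 (Sp t)). pose proof (pow2_ge_0 (T t)).
  pose proof (pow2_ge_0 (N1 t)). pose proof (pow2_ge_0 (N2 t - N3 t)).
  assert (0 <= - N1 t * N2 t) by nra. assert (0 <= - N1 t * N3 t) by nra.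
  split; nra.
Qed.

Lemma P1_pos t : 0 < P1 t.
Proof. destruct (Hsign t) as (h1 & h2 & h3). unfold P1. positivity. Qed.

Lemma P2_pos t : 0 < P2 t.
Proof. destruct (Hsign t) as (h1 & h2 & h3). unfold P2. positivity. Qed.

Lemma P1_le t : P1 t <= (2 / 3) ^ 2.
Proof.
  destruct (Hsign t) as (h1 & h2 & h3). destruct (neg_N1_mul_le t) as [B2 B3].
  replace (P1 t) with ((- N1 t * N2 t) * (- N1 t * N3 t)) by (unfold P1; ring).
  replace ((2 / 3) ^ 2) with (2 / 3 * (2 / 3)) by ring.
  apply Rmult_le_compat; nra.
Qed.

Lemma P2_le t : P2 t <= (2 / 3) ^ 3.
Proof.
  destruct (Hsign t) as (h1 & h2 & h3). destruct (neg_N1_mul_le t) as [B2 B3].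
  replace (P2 t) with ((- N1 t * N2 t) ^ 2 * (- N1 t * N3 t)) by (unfold P2; ring).
  replace ((2 / 3) ^ 3) with ((2 / 3) ^ 2 * (2 / 3)) by ring.
  apply Rmult_le_compat; [apply pow2_ge_0|nra| |lra].
  apply pow_incr. nra.
Qed.

Lemma V1_pos t : 0 < V1 t.
Proof. apply Rdiv_lt_0_compat; [positivity|apply P1_pos]. Qed.

Lemma V2_pos t : 0 < V2 t.
Proof. apply Rdiv_lt_0_compat; [positivity|apply P2_pos]. Qed.

Lemma V1_nonincreasing t : 0 <= t -> V1 t <= V1 0.
Proof.
  pose proof (is_derive_scale (fun s => 1 - 2 * Sp s) (continuous_rate1 _ _ _ _ _ HWH)) as da1.
  destruct HWH as [dN1 dN2 dN3 dSp dT _]. intros Ht.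
  apply (nonincreasing_of_derive V1
    (fun x => - V1 x * (2 * (2 * Sp x - 1) ^ 2 + 8 / 3 * T x ^ 2))); [lra| |].
  - intros x _. destruct (Hsign x) as (h1 & h2 & h3). unfold V1, P1, a1. auto_derive.
    + ex_derive_by_hyps. apply Rgt_not_eq. positivity.
    + rewrite (is_derive_Derive _ _ _ (da1 x)), (is_derive_Derive _ _ _ (dN1 x)),
        (is_derive_Derive _ _ _ (dN2 x)), (is_derive_Derive _ _ _ (dN3 x)).
      unfold q_T. field. repeat split; lra.
  - intros x _. enough (0 <= V1 x * (2 * (2 * Sp x - 1) ^ 2 + 8 / 3 * T x ^ 2)) by lra.
    pose proof (pow2_ge_0 (2 * Sp x - 1)). pose proof (pow2_ge_0 (T x)).
    apply Rmult_le_pos; [apply Rlt_le, V1_pos|lra].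
Qed.

Lemma V2_nonincreasing t : 0 <= t -> V2 t <= V2 0.
Proof.
  pose proof (is_derive_scale (fun s => 1 + Sp s + T s) (continuous_rate2 _ _ _ _ _ HWH)) as da2.
  destruct HWH as [dN1 dN2 dN3 dSp dT _]. intros Ht.
  apply (nonincreasing_of_derive V2
    (fun x => - V2 x * (12 * (Sp x - 1 / 6) ^ 2 + 4 * (T x + 1 / 2) ^ 2))); [lra| |].
  - intros x _. destruct (Hsign x) as (h1 & h2 & h3). unfold V2, P2, a2. auto_derive.
    + ex_derive_by_hyps. apply Rgt_not_eq. positivity.
    + rewrite (is_derive_Derive _ _ _ (da2 x)), (is_derive_Derive _ _ _ (dN1 x)),
        (is_derive_Derive _ _ _ (dN2 x)), (is_derive_Derive _ _ _ (dN3 x)).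
      unfold q_T. field. repeat split; lra.
  - intros x _. enough (0 <= V2 x * (12 * (Sp x - 1 / 6) ^ 2 + 4 * (T x + 1 / 2) ^ 2)) by lra.
    pose proof (pow2_ge_0 (Sp x - 1 / 6)). pose proof (pow2_ge_0 (T x + 1 / 2)).
    apply Rmult_le_pos; [apply Rlt_le, V2_pos|lra].
Qed.

Lemma scale1_sq_le : exists C, forall t, 0 <= t -> a1 t ^ 2 <= C.
Proof.
  exists (V1 0 * (2 / 3) ^ 2). intros t Ht.
  replace (a1 t ^ 2) with (V1 t * P1 t) by (unfold V1; field; apply Rgt_not_eq, P1_pos).
  pose proof (V1_nonincreasing t Ht). pose proof (V1_pos t). pose proof (P1_pos t).
  pose proof (P1_le t). apply Rmult_le_compat; lra.
Qed.

Lemma scale2_sq_le : exists C, forall t, 0 <= t -> a2 t ^ 2 <= C * exp (- (2 / 3) * t).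
Proof.
  exists (V2 0 * (2 / 3) ^ 3). intros t Ht.
  replace (a2 t ^ 2) with (V2 t * P2 t * exp (- (2 / 3) * t)).
  - pose proof (V2_nonincreasing t Ht). pose proof (V2_pos t). pose proof (P2_pos t).
    pose proof (P2_le t). apply Rmult_le_compat_r; [apply Rlt_le, exp_pos|].
    apply Rmult_le_compat; lra.
  - unfold V2. replace (exp (- (2 / 3) * t)) with (/ exp (2 / 3 * t))
      by (rewrite <- exp_Ropp; f_equal; ring).
    field. split; apply Rgt_not_eq; (apply exp_pos || apply P2_pos).
Qed.

End TypeVIII.

Section TypeVII0.
Variables (N1 N2 N3 Sp T : R -> R).
Hypothesis HWH : WH_scaled N1 N2 N3 Sp T.
Hypothesis Hsign : forall t, N1 t = 0 /\ 0 < N2 t /\ 0 < N3 t.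
(* The excluded set N2 = N3, T = 0 consists of the locally rotationally symmetric solutions. *)
Hypothesis not_LRS : forall t, ~ (N2 t = N3 t /\ T t = 0).

Let D t := N2 t - N3 t.
Let S t := N2 t + N3 t.
Let a1 := scale (fun s => 1 - 2 * Sp s).
Let a2 := scale (fun s => 1 + Sp s + T s).

Lemma constraint_VII0 t : Sp t ^ 2 + T t ^ 2 / 3 + 3 / 4 * D t ^ 2 = 1.
Proof.
  pose proof (constraint _ _ _ _ _ HWH t) as con. destruct (Hsign t) as (h1 & _ & _).
  rewrite h1 in con. unfold D. lra.
Qed.

Lemma Sp_sq_lt_1 t : Sp t ^ 2 < 1.
Proof.
  pose proof (constraint_VII0 t). pose proof (pow2_ge_0 (T t)). pose proof (pow2_ge_0 (D t)).
  destruct (Rlt_le_dec (Sp t ^ 2) 1) as [Hlt|Hge]; [exact Hlt|exfalso].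
  apply (not_LRS t). split.
  - assert (D t * D t = 0) as HD by lra. apply Rmult_integral in HD. unfold D in HD. lra.
  - assert (T t * T t = 0) as HT by lra. apply Rmult_integral in HT. lra.
Qed.

Lemma one_add_Sp_pos t : 0 < 1 + Sp t.
Proof. pose proof (Sp_sq_lt_1 t). nra. Qed.

Lemma one_add_Sp_le_2 t : 1 + Sp t <= 2.
Proof. pose proof (Sp_sq_lt_1 t). nra. Qed.

Lemma D_sq_le t : D t ^ 2 <= 8 / 3 * (1 + Sp t).
Proof.
  pose proof (constraint_VII0 t). pose proof (one_add_Sp_pos t). pose proof (pow2_ge_0 (T t)). nra.
Qed.

Lemma T_mul_D_bounds t : -1 <= T t * D t <= 1.
Proof.
  pose proof (constraint_VII0 t). pose proof (pow2_ge_0 (Sp t)).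
  pose proof (pow2_ge_0 (2 * T t - 3 * D t)). pose proof (pow2_ge_0 (2 * T t + 3 * D t)).
  split; nra.
Qed.

Lemma q_VII0 t : q_T (Sp t) (T t) = 2 - 3 / 2 * D t ^ 2.
Proof. pose proof (constraint_VII0 t). unfold q_T. lra. Qed.

Lemma deriv_N2_VII0 t :
  is_derive N2 t ((2 - 3 / 2 * D t ^ 2 + 2 * Sp t + 2 * T t) * N2 t).
Proof. rewrite <- q_VII0. apply (deriv_N2 _ _ _ _ _ HWH). Qed.

Lemma deriv_N3_VII0 t :
  is_derive N3 t ((2 - 3 / 2 * D t ^ 2 + 2 * Sp t - 2 * T t) * N3 t).
Proof. rewrite <- q_VII0. apply (deriv_N3 _ _ _ _ _ HWH). Qed.

Lemma deriv_Sp_VII0 t : is_derive Sp t (- 3 / 2 * D t ^ 2 * (1 + Sp t)).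
Proof.
  eapply is_derive_eq; [apply (deriv_Sp _ _ _ _ _ HWH)|].
  rewrite q_VII0. destruct (Hsign t) as (h1 & _ & _). rewrite h1. unfold D; cbv beta. field.
Qed.

Lemma deriv_T_VII0 t : is_derive T t (- 3 / 2 * D t ^ 2 * T t - 9 / 2 * D t * S t).
Proof.
  eapply is_derive_eq; [apply (deriv_T _ _ _ _ _ HWH)|].
  rewrite q_VII0. destruct (Hsign t) as (h1 & _ & _). rewrite h1. unfold D, S; cbv beta. field.
Qed.

Lemma Sp_nonincreasing a b : a <= b -> Sp b <= Sp a.
Proof.
  intros Hab. apply (nonincreasing_of_derive Sp (fun x => - 3 / 2 * D x ^ 2 * (1 + Sp x)) a b Hab);
    [intros x _; apply deriv_Sp_VII0|].
  intros x _. pose proof (one_add_Sp_pos x). pose proof (pow2_ge_0 (D x)). nra.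
Qed.

Lemma scale2_sq_conserved t : 0 <= t ->
  a2 t ^ 2 * N2 t / (1 + Sp t) = N2 0 / (1 + Sp 0).
Proof.
  intros Ht.
  pose proof (is_derive_scale (fun s => 1 + Sp s + T s) (continuous_rate2 _ _ _ _ _ HWH)) as dA.
  pose proof deriv_N2_VII0 as dN2. pose proof deriv_Sp_VII0 as dSp.
  set (F t := scale (fun s => 1 + Sp s + T s) t ^ 2 * N2 t / (1 + Sp t)).
  assert (dF : forall x, is_derive F x 0).
  { intros x. pose proof (one_add_Sp_pos x). unfold F. auto_derive.
    - ex_derive_by_hyps. lra.
    - rewrite (is_derive_Derive _ _ _ (dA x)), (is_derive_Derive _ _ _ (dN2 x)),
        (is_derive_Derive _ _ _ (dSp x)).
      field. lra. }
  replace (N2 0 / (1 + Sp 0)) with (F 0) by (unfold F; rewrite scale_0; field;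
    apply Rgt_not_eq, one_add_Sp_pos).
  apply Rle_antisym.
  - apply (nonincreasing_of_derive F (fun _ => 0)); [lra|intros; apply dF|intros; lra].
  - apply (nondecreasing_of_derive F (fun _ => 0)); [lra|intros; apply dF|intros; lra].
Qed.

Let c0 := / (1 + Sp 0).
Let W t := N2 t ^ 2 * N3 t ^ 2 / ((1 + Sp t) ^ 3 * (c0 + 4 * t)).

Lemma c0_pos : 0 < c0.
Proof. apply Rinv_0_lt_compat, one_add_Sp_pos. Qed.

Lemma inv_one_add_Sp_le t : 0 <= t -> / (1 + Sp t) <= c0 + 4 * t.
Proof.
  intros Ht. pose proof deriv_Sp_VII0 as dSp.
  enough (/ (1 + Sp t) - 4 * t <= / (1 + Sp 0) - 4 * 0) by (unfold c0; lra).
  apply (nonincreasing_of_derive (fun s => / (1 + Sp s) - 4 * s)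
    (fun s => 3 / 2 * D s ^ 2 / (1 + Sp s) - 4)); [lra| |].
  - intros x _. pose proof (one_add_Sp_pos x). auto_derive.
    + ex_derive_by_hyps. lra.
    + rewrite (is_derive_Derive _ _ _ (dSp x)). field. lra.
  - intros x _. pose proof (one_add_Sp_pos x). pose proof (D_sq_le x).
    apply Rle_minus, Rle_div_l; lra.
Qed.

Lemma W_pos t : 0 <= t -> 0 < W t.
Proof.
  intros Ht. destruct (Hsign t) as (_ & h2 & h3). pose proof (one_add_Sp_pos t).
  pose proof c0_pos. unfold W, Rdiv. positivity.
Qed.

Lemma W_nondecreasing t : 0 <= t -> W 0 <= W t.
Proof.
  pose proof deriv_N2_VII0 as dN2. pose proof deriv_N3_VII0 as dN3.
  pose proof deriv_Sp_VII0 as dSp. pose proof c0_pos. intros Ht.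
  apply (nondecreasing_of_derive W
    (fun x => W x * (8 * (1 + Sp x) - 3 / 2 * D x ^ 2 - 4 / (c0 + 4 * x)))); [lra| |].
  - intros x Hx. destruct (Hsign x) as (_ & h2 & h3). pose proof (one_add_Sp_pos x).
    unfold W. auto_derive.
    + ex_derive_by_hyps. apply Rgt_not_eq. positivity.
    + rewrite (is_derive_Derive _ _ _ (dN2 x)), (is_derive_Derive _ _ _ (dN3 x)),
        (is_derive_Derive _ _ _ (dSp x)).
      field. split; apply Rgt_not_eq; positivity.
  - intros x Hx. apply Rmult_le_pos; [apply Rlt_le, W_pos; lra|].
    pose proof (one_add_Sp_pos x). pose proof (D_sq_le x).
    assert (Hinv : / (c0 + 4 * x) <= 1 + Sp x).
    { rewrite <- (Rinv_inv (1 + Sp x)).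
      apply Rinv_le_contravar; [apply Rinv_0_lt_compat; lra|].
      apply inv_one_add_Sp_le, Hx. }
    unfold Rdiv. lra.
Qed.

Lemma N2N3_lower t : 0 <= t -> W 0 * (c0 + 4 * t) * (1 + Sp t) ^ 3 <= N2 t ^ 2 * N3 t ^ 2.
Proof.
  intros Ht. pose proof (W_nondecreasing t Ht). pose proof (one_add_Sp_pos t).
  pose proof c0_pos. assert (Hden : 0 < (1 + Sp t) ^ 3 * (c0 + 4 * t)) by positivity.
  replace (N2 t ^ 2 * N3 t ^ 2) with (W t * ((1 + Sp t) ^ 3 * (c0 + 4 * t)))
    by (unfold W; field; lra).
  rewrite Rmult_assoc, (Rmult_comm (c0 + 4 * t)).
  apply Rmult_le_compat_r; lra.
Qed.

Lemma N2N3_upper_of_N2_lt M t : 0 < M -> N2 t < M * (1 + Sp t) ->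
  N2 t ^ 2 * N3 t ^ 2 <= M ^ 2 * (4 * M ^ 2 + 16 / 3) * (1 + Sp t) ^ 3.
Proof.
  intros HM Hlt. destruct (Hsign t) as (_ & h2 & h3).
  pose proof (one_add_Sp_pos t). pose proof (one_add_Sp_le_2 t). pose proof (D_sq_le t).
  assert (HN2 : N2 t ^ 2 <= M ^ 2 * (1 + Sp t) ^ 2).
  { rewrite <- Rpow_mult_distr. apply pow_incr. lra. }
  assert (HN3 : N3 t ^ 2 <= (4 * M ^ 2 + 16 / 3) * (1 + Sp t)).
  { assert (N3 t ^ 2 <= 2 * N2 t ^ 2 + 2 * D t ^ 2).
    { pose proof (pow2_ge_0 (N2 t + D t)). unfold D in *. lra. }
    assert (0 <= M ^ 2) by apply pow2_ge_0. nra. }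
  replace (M ^ 2 * (4 * M ^ 2 + 16 / 3) * (1 + Sp t) ^ 3) with
    ((M ^ 2 * (1 + Sp t) ^ 2) * ((4 * M ^ 2 + 16 / 3) * (1 + Sp t))) by ring.
  apply Rmult_le_compat; try apply pow2_ge_0; lra.
Qed.

Lemma N2_dominates M : 0 < M ->
  exists T0, 0 <= T0 /\ forall t, T0 <= t -> M * (1 + Sp t) <= N2 t.
Proof.
  intros HM. set (K := W 0). assert (HK : 0 < K) by (apply W_pos; lra).
  set (B := M ^ 2 * (4 * M ^ 2 + 16 / 3)). pose proof c0_pos.
  exists (Rmax 0 ((B / K - c0) / 4 + 1)). split; [apply Rmax_l|]. intros t Ht.
  pose proof (Rmax_l 0 ((B / K - c0) / 4 + 1)). pose proof (Rmax_r 0 ((B / K - c0) / 4 + 1)).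
  destruct (Rle_lt_dec (M * (1 + Sp t)) (N2 t)) as [Hle|Hlt]; [exact Hle|exfalso].
  pose proof (N2N3_lower t ltac:(lra)). pose proof (N2N3_upper_of_N2_lt M t HM Hlt).
  pose proof (one_add_Sp_pos t). assert (0 < (1 + Sp t) ^ 3) by positivity.
  assert (K * (c0 + 4 * t) <= B).
  { apply (Rmult_le_reg_r ((1 + Sp t) ^ 3)); [lra|]. unfold B, K. lra. }
  assert (c0 + 4 * t <= B / K) by (apply Rle_div_r; lra).
  lra.
Qed.

Lemma lim_one_add_Sp_div_N2 : is_lim (fun t => (1 + Sp t) / N2 t) p_infty 0.
Proof.
  apply is_lim_spec. intros [eps Heps]. simpl.
  destruct (N2_dominates (2 / eps)) as [T0 [_ HT0]]; [apply Rdiv_lt_0_compat; lra|].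
  exists T0. intros t Ht. specialize (HT0 t (Rlt_le _ _ Ht)).
  destruct (Hsign t) as (_ & h2 & _). pose proof (one_add_Sp_pos t).
  rewrite Rminus_0_r, Rabs_pos_eq by (apply Rlt_le, Rdiv_lt_0_compat; lra).
  apply Rlt_div_l; [lra|].
  assert (2 / eps * (1 + Sp t) = (1 + Sp t) / eps * 2) by (field; lra).
  assert ((1 + Sp t) / eps * eps = 1 + Sp t) by (field; lra).
  assert (0 < (1 + Sp t) / eps) by (apply Rdiv_lt_0_compat; lra).
  nra.
Qed.

Lemma lim_scale2 : is_lim a2 p_infty 0.
Proof.
  apply is_lim_0_of_sq; [intros; apply Rlt_le, scale_pos|].
  apply (is_lim_0_of_le _ (fun t => N2 0 / (1 + Sp 0) * ((1 + Sp t) / N2 t)) 0).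
  - intros t. apply pow2_ge_0.
  - intros t Ht. right. rewrite <- (scale2_sq_conserved t Ht).
    destruct (Hsign t) as (_ & h2 & _). pose proof (one_add_Sp_pos t). field. lra.
  - replace (Finite 0) with (Rbar_mult (N2 0 / (1 + Sp 0)) 0) by (simpl; now rewrite Rmult_0_r).
    apply is_lim_scal_l, lim_one_add_Sp_div_N2.
Qed.

Lemma lim_scale1_of_Sp_lt t0 : 0 <= t0 -> Sp t0 < 1 / 2 ->
  is_lim a1 p_infty 0.
Proof.
  intros Ht0 Hsp.
  pose proof (is_derive_scale (fun s => 1 - 2 * Sp s) (continuous_rate1 _ _ _ _ _ HWH)) as dA.
  set (k := 1 - 2 * Sp t0). assert (Hk : 0 < k) by (unfold k; lra).
  set (G t := a1 t * exp (k * t)).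
  assert (G_le : forall t, t0 <= t -> G t <= G t0).
  { intros t Ht. apply (nonincreasing_of_derive G (fun x => G x * (2 * (Sp x - Sp t0))));
      [lra| |].
    - intros x _. unfold G, a1. auto_derive; [ex_derive_by_hyps|].
      rewrite (is_derive_Derive _ _ _ (dA x)). unfold k. ring.
    - intros x Hx. pose proof (Sp_nonincreasing t0 x (proj1 Hx)).
      assert (0 < G x) by (unfold G; positivity). nra. }
  apply (is_lim_0_of_le _ (fun t => G t0 * exp (- k * t)) t0).
  - intros t. apply Rlt_le, scale_pos.
  - intros t Ht. pose proof (G_le t Ht). pose proof (exp_pos (- k * t)).
    replace (a1 t) with (G t * exp (- k * t)); [nra|].
    unfold G. rewrite Rmult_assoc, <- exp_plus. replace (k * t + - k * t) with 0 by ring.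
    rewrite exp_0. ring.
  - apply is_lim_scal_exp_neg, Hk.
Qed.

Lemma deriv_g_lower_bound (sp tt d w s del : R) :
  sp ^ 2 + tt ^ 2 / 3 + 3 / 4 * d ^ 2 = 1 -> 0 < del -> del <= 1 - sp ^ 2 ->
  -1 <= w <= 1 -> 1 <= s -> 2 / del <= s ->
  del / 2 <= tt ^ 2 / 3 + 3 / 4 * d ^ 2 - d ^ 2 * w / (4 * s) - w ^ 2 / (3 * s ^ 2).
Proof.
  intros Hc Hdel Hsp Hw Hs1 Hs2.
  assert (Hr : 0 < / s <= del / 2).
  { split; [apply Rinv_0_lt_compat; lra|].
    replace (del / 2) with (/ (2 / del)) by (field; lra).
    apply Rinv_le_contravar; [apply Rdiv_lt_0_compat|]; lra. }
  assert (Hr1 : / s <= 1) by (rewrite <- Rinv_1; apply Rinv_le_contravar; lra).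
  replace (d ^ 2 * w / (4 * s)) with (d ^ 2 * w * / s / 4) by (field; lra).
  replace (w ^ 2 / (3 * s ^ 2)) with (w ^ 2 * (/ s) ^ 2 / 3) by (field; lra).
  set (r := / s) in *.
  pose proof (pow2_ge_0 sp). pose proof (pow2_ge_0 tt). pose proof (pow2_ge_0 d) as Hd.
  assert (d ^ 2 <= 4 / 3) by lra.
  assert (d ^ 2 * w <= 4 / 3).
  { assert (0 <= d ^ 2 * (1 - w)) by (apply Rmult_le_pos; lra). lra. }
  assert (d ^ 2 * w * r <= 4 / 3 * r) by (apply Rmult_le_compat_r; lra).
  assert (w ^ 2 <= 1) by nra.
  assert (r ^ 2 <= r) by nra.
  assert (w ^ 2 * r ^ 2 <= r) by (pose proof (pow2_ge_0 w); pose proof (pow2_ge_0 r); nra).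
  lra.
Qed.

Let g t := - ln (1 + Sp t) + T t * D t / (6 * S t).

Lemma deriv_g x : is_derive g x (T x ^ 2 / 3 + 3 / 4 * D x ^ 2
  - D x ^ 2 * (T x * D x) / (4 * S x) - (T x * D x) ^ 2 / (3 * S x ^ 2)).
Proof.
  pose proof deriv_N2_VII0 as dN2. pose proof deriv_N3_VII0 as dN3.
  pose proof deriv_Sp_VII0 as dSp. pose proof deriv_T_VII0 as dT.
  destruct (Hsign x) as (_ & h2 & h3). pose proof (one_add_Sp_pos x).
  unfold g, D, S. auto_derive.
  - ex_derive_by_hyps; lra.
  - rewrite (is_derive_Derive _ _ _ (dN2 x)), (is_derive_Derive _ _ _ (dN3 x)),
      (is_derive_Derive _ _ _ (dSp x)), (is_derive_Derive _ _ _ (dT x)).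
    unfold D, S. field. lra.
Qed.

Lemma Sp_eventually_lt_half : exists t0, 0 <= t0 /\ Sp t0 < 1 / 2.
Proof.
  apply NNPP. intros Hno.
  assert (Hge : forall t, 0 <= t -> 1 / 2 <= Sp t).
  { intros t Ht. apply Rnot_lt_le. intros Hlt. apply Hno. now exists t. }
  set (del := 1 - Sp 0 ^ 2).
  assert (Hdel : 0 < del) by (pose proof (Sp_sq_lt_1 0); unfold del; lra).
  assert (Hsp : forall t, 0 <= t -> del <= 1 - Sp t ^ 2).
  { intros t Ht. pose proof (Hge t Ht). pose proof (Sp_nonincreasing 0 t Ht).
    unfold del. nra. }
  destruct (N2_dominates (2 / del + 1)) as [T0 [HT0 Hdom]].
  { pose proof (Rdiv_lt_0_compat 2 del ltac:(lra) Hdel). lra. }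
  assert (HS : forall t, T0 <= t -> 1 <= S t /\ 2 / del <= S t).
  { intros t Ht. specialize (Hdom t Ht). pose proof (Hge t ltac:(lra)).
    destruct (Hsign t) as (_ & h2 & h3). pose proof (Rdiv_lt_0_compat 2 del ltac:(lra) Hdel).
    unfold S. split; nra. }
  destruct (unbounded_of_derive_ge g (fun x => T x ^ 2 / 3 + 3 / 4 * D x ^ 2
    - D x ^ 2 * (T x * D x) / (4 * S x) - (T x * D x) ^ 2 / (3 * S x ^ 2)) T0 (del / 2) (1 / 6))
    as [t [Ht Hgt]].
  - lra.
  - intros x _. apply deriv_g.
  - intros x Hx. destruct (HS x Hx).
    apply (deriv_g_lower_bound (Sp x)); [apply constraint_VII0|lra|apply Hsp; lra|
      apply T_mul_D_bounds|lra|lra].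
  - destruct (HS t Ht) as [HS1 _]. pose proof (Hge t ltac:(lra)).
    destruct (T_mul_D_bounds t) as [_ Hw].
    assert (0 <= ln (1 + Sp t)) by (rewrite <- ln_1; apply ln_le; lra).
    assert (T t * D t / (6 * S t) <= 1 / 6) by (apply Rle_div_l; lra).
    unfold g in Hgt. lra.
Qed.

Lemma lim_scale1 : is_lim a1 p_infty 0.
Proof.
  destruct Sp_eventually_lt_half as [t0 [Ht0 Hsp]].
  exact (lim_scale1_of_Sp_lt t0 Ht0 Hsp).
Qed.
End TypeVII0.

Lemma scale_factors_vanish_VII0 (N1 N2 N3 Sp Sm : R -> R) : WH_solution N1 N2 N3 Sp Sm ->
  (forall t, N1 t = 0 /\ 0 < N2 t /\ 0 < N3 t) ->
  (forall t, ~ (N2 t = N3 t /\ Sm t = 0)) ->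
  is_lim (a_of (Sigma1 Sp Sm)) p_infty 0 /\
  is_lim (a_of (Sigma2 Sp Sm)) p_infty 0 /\
  is_lim (a_of (Sigma3 Sp Sm)) p_infty 0.
Proof.
  intros HW Hsign Hnot.
  pose proof (WH_solution_scaled _ _ _ _ _ HW) as HWH.
  assert (not_LRS : forall t, ~ (N2 t = N3 t /\ sqrt 3 * Sm t = 0)).
  { intros t [HN HT]. apply (Hnot t). split; [exact HN|].
    pose proof sqrt3_pos. destruct (Rmult_integral _ _ HT); lra. }
  assert (Hsign' : forall t, N1 t = 0 /\ 0 < N3 t /\ 0 < N2 t)
    by (intros t; destruct (Hsign t) as (? & ? & ?); auto).
  assert (not_LRS' : forall t, ~ (N3 t = N2 t /\ - (sqrt 3 * Sm t) = 0)).
  { intros t [HN HT]. apply (not_LRS t). split; lra. }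
  rewrite a_of_Sigma1, a_of_Sigma2, a_of_Sigma3. split; [|split].
  - exact (lim_scale1 _ _ _ _ _ HWH Hsign not_LRS).
  - exact (lim_scale2 _ _ _ _ _ HWH Hsign not_LRS).
  - exact (lim_scale2 _ _ _ _ _ (WH_scaled_swap _ _ _ _ _ HWH) Hsign' not_LRS').
Qed.

Lemma scale_factors_bounded_VIII (N1 N2 N3 Sp Sm : R -> R) : WH_solution N1 N2 N3 Sp Sm ->
  (forall t, N1 t < 0 /\ 0 < N2 t /\ 0 < N3 t) ->
  is_lim (a_of (Sigma2 Sp Sm)) p_infty 0 /\
  is_lim (a_of (Sigma3 Sp Sm)) p_infty 0 /\
  bounded_on_nonneg (a_of (Sigma1 Sp Sm)) /\
  bounded_on_nonneg (a_of (Sigma2 Sp Sm)) /\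
  bounded_on_nonneg (a_of (Sigma3 Sp Sm)).
Proof.
  intros HW Hsign.
  pose proof (WH_solution_scaled _ _ _ _ _ HW) as HWH.
  assert (Hsign' : forall t, N1 t < 0 /\ 0 < N3 t /\ 0 < N2 t)
    by (intros t; destruct (Hsign t) as (? & ? & ?); auto).
  destruct (scale2_sq_le _ _ _ _ _ HWH Hsign) as [C2 H2].
  destruct (scale2_sq_le _ _ _ _ _ (WH_scaled_swap _ _ _ _ _ HWH) Hsign') as [C3 H3].
  destruct (scale1_sq_le _ _ _ _ _ HWH Hsign) as [C1 H1].
  rewrite a_of_Sigma1, a_of_Sigma2, a_of_Sigma3.
  assert (Hpos : forall f t, 0 <= scale f t) by (intros; apply Rlt_le, scale_pos).
  destruct (lim_0_and_bounded_of_sq_le_exp _ C2 (2 / 3) ltac:(lra) (Hpos _) H2).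
  destruct (lim_0_and_bounded_of_sq_le_exp _ C3 (2 / 3) ltac:(lra) (Hpos _) H3).
  repeat split; try assumption.
  exact (bounded_on_nonneg_of_sq_le _ C1 (Hpos _) H1).
Qed.

Theorem mainTheorem19 (N1 N2 N3 Sp Sm : R -> R) :
  WH_solution N1 N2 N3 Sp Sm ->
  ((forall t, N1 t = 0 /\ 0 < N2 t /\ 0 < N3 t) ->
   (forall t, ~ (N2 t = N3 t /\ Sm t = 0)) ->
   is_lim (a_of (Sigma1 Sp Sm)) p_infty 0 /\
   is_lim (a_of (Sigma2 Sp Sm)) p_infty 0 /\
   is_lim (a_of (Sigma3 Sp Sm)) p_infty 0) /\
  ((forall t, N1 t < 0 /\ 0 < N2 t /\ 0 < N3 t) ->
   is_lim (a_of (Sigma2 Sp Sm)) p_infty 0 /\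
   is_lim (a_of (Sigma3 Sp Sm)) p_infty 0 /\
   bounded_on_nonneg (a_of (Sigma1 Sp Sm)) /\
   bounded_on_nonneg (a_of (Sigma2 Sp Sm)) /\
   bounded_on_nonneg (a_of (Sigma3 Sp Sm))).
Proof.
  intros HW. split.
  - exact (scale_factors_vanish_VII0 N1 N2 N3 Sp Sm HW).
  - exact (scale_factors_bounded_VIII N1 N2 N3 Sp Sm HW).
Qed.
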